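(* Let $(M,J)$ be an almost complex manifold and $\nabla$ an affine connection on $M$, and let $G^\nabla$ be the $(1,2)$-tensor $G^\nabla(X,Y):=-\frac12J(\nabla_YJ)X$ (in indices $G^b{}_{ca}=\frac12(\nabla_aJ^b{}_d)J^d{}_c$). The following are equivalent: (i) $\nabla$ is compatible with $J$, i.e. $\nabla_aJ^a{}_b=0$; (ii) $G^\nabla$ is trace-free; (iii) $JG^\nabla$ (the tensor $(X,Y)\mapsto JG^\nabla(X,Y)$) is trace-free; (iv) the tensor $(X,Y)\mapsto G^\nabla(X,JY)$ is trace-free; (v) the tensor $(X,Y)\mapsto G^\nabla(JX,JY)$ is trace-free.
   Context: $J$ is an endomorphism of $TM$ with $J^2=-\mathrm{id}$; abstract index notation is used, with $J^a{}_b$ denoting $J$ and repeated indices indicating contraction. A $(1,2)$-tensor $H^a{}_{bc}$ is called trace-free if both contractions $H^a{}_{ab}$ and $H^a{}_{ba}$ vanish. *)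

From HB Require Import structures.
From mathcomp Require Import all_boot all_order all_algebra.
From mathcomp Require Import all_classical all_reals all_analysis.
Set Implicit Arguments. Unset Strict Implicit. Unset Printing Implicit Defensive.
Import Order.TTheory GRing.Theory Num.Theory.
Import numFieldNormedType.Exports.
Local Open Scope ring_scope.

(* Local-coordinate model on an open chart U of R^n (coordinates x : 'rV[R]_n).
   A (1,1)-tensor field is given by components  J b d x  = J^b_d(x);
   an affine connection by its Christoffel symbols  Gam b a e x = Gamma^b_{ae}(x),
   so that  nabla_a V^b = d_a V^b + Gamma^b_{ae} V^e.
   A (1,2)-tensor (at a point) is  H : 'I_n -> 'I_n -> 'I_n -> R  with
   H b c a = H^b_{ca}. *)

Section Defs.
Variables (R : realType) (n : nat).

Definition coord_dir (a : 'I_n) : 'rV[R]_n := delta_mx 0 a.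

(* nablaJ J Gam x a b d = (nabla_a J)^b_d at x *)
Definition nablaJ (J : 'I_n -> 'I_n -> 'rV[R]_n -> R)
  (Gam : 'I_n -> 'I_n -> 'I_n -> 'rV[R]_n -> R) (x : 'rV[R]_n)
  (a b d : 'I_n) : R :=
  derive (J b d) x (coord_dir a)
  + \sum_(e < n) Gam b a e x * J e d x
  - \sum_(e < n) Gam e a d x * J b e x.

Definition compatible J Gam (x : 'rV[R]_n) : Prop :=
  forall b : 'I_n, \sum_(a < n) nablaJ J Gam x a a b = 0.

Definition trace_free (H : 'I_n -> 'I_n -> 'I_n -> R) : Prop :=
  forall b : 'I_n, \sum_(a < n) H a a b = 0 /\ \sum_(a < n) H a b a = 0.

Definition Gtensor J Gam x : 'I_n -> 'I_n -> 'I_n -> R :=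
  fun b c a => 2^-1 * \sum_(d < n) nablaJ J Gam x a b d * J d c x.

Definition JG J Gam x : 'I_n -> 'I_n -> 'I_n -> R :=
  fun b c a => \sum_(e < n) J b e x * Gtensor J Gam x e c a.

Definition G_XJY J Gam x : 'I_n -> 'I_n -> 'I_n -> R :=
  fun b c a => \sum_(e < n) Gtensor J Gam x b c e * J e a x.

Definition G_JXJY J Gam x : 'I_n -> 'I_n -> 'I_n -> R :=
  fun b c a => \sum_(d < n) \sum_(e < n) Gtensor J Gam x b d e * J d c x * J e a x.

Definition almost_complex_at (J : 'I_n -> 'I_n -> 'rV[R]_n -> R) x : Prop :=
  forall b c : 'I_n, \sum_(d < n) J b d x * J d c x = - (b == c)%:R.

End Defs.

From HB Require Import structures.
From mathcomp Require Import all_boot all_order all_algebra.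
From mathcomp Require Import all_classical all_reals all_analysis.
Set Implicit Arguments. Unset Strict Implicit.
Import Order.TTheory GRing.Theory Num.Theory.
Import numFieldNormedType.Exports.
Local Open Scope ring_scope.

(* At each point the matrices N_a := nabla_a J anticommute with J:
   differentiating J^2 = -1 gives this for the derivative part, and the
   Christoffel part is a commutator [Gamma_a, J], which anticommutes with J
   because J^2 is scalar.  A matrix anticommuting with J is trace-free, and so
   are J N_a, N_a J and their J-weighted combinations; hence the contractions
   H^a_{ab} of all four tensors vanish identically, while their contractions
   H^a_{ba} equal C/2 or (C J)/2 with C_b = nabla_a J^a_b.  As J is invertible,
   each tensor is trace-free iff C = 0. *)

Section AnticommutingMatrices.
Variables (R : numFieldType) (n : nat) (J : 'M[R]_n).

Definition anticomm (A : 'M[R]_n) : Prop := A *m J = - (J *m A).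

Lemma anticomm_add A B : anticomm A -> anticomm B -> anticomm (A + B).
Proof. by move=> hA hB; rewrite /anticomm mulmxDl mulmxDr hA hB opprD. Qed.

Lemma anticomm_mulmxl A : anticomm A -> anticomm (J *m A).
Proof. by move=> hA; rewrite /anticomm -mulmxA hA mulmxN. Qed.

Lemma anticomm_mulmxr A : anticomm A -> anticomm (A *m J).
Proof. by move=> hA; rewrite /anticomm {1}hA mulNmx mulmxA. Qed.

Lemma anticommZ c A : anticomm A -> anticomm (c *: A).
Proof. by move=> hA; rewrite /anticomm -scalemxAl hA scalerN scalemxAr. Qed.

Lemma anticomm_sum I (r : seq I) (A : I -> 'M[R]_n) :
  (forall i, anticomm (A i)) -> anticomm (\sum_(i <- r) A i).
Proof.
move=> hA; rewrite /anticomm mulmx_suml mulmx_sumr -sumrN.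
by apply: eq_bigr => i _; exact: hA.
Qed.

Hypothesis sqrJ : J *m J = - 1%:M.

Lemma commutator_anticomm G : anticomm (G *m J - J *m G).
Proof.
rewrite /anticomm mulmxBl mulmxBr -!mulmxA sqrJ !mulmxA sqrJ.
by rewrite mulmxN mulNmx mulmx1 mul1mx opprB.
Qed.

Lemma mulmx_anticommK A : anticomm A -> J *m A *m J = A.
Proof. by move=> hA; rewrite -mulmxA hA mulmxN mulmxA sqrJ mulNmx mul1mx opprK. Qed.

(* tr A = -tr (A J J) = tr (J A J) = tr (A J J), so tr (A J J) = 0. *)
Lemma mxtrace_anticomm A : anticomm A -> \tr A = 0.
Proof.
move=> hA; have AJJ : A *m J *m J = - A by rewrite -mulmxA sqrJ mulmxN mulmx1.
have : \tr (A *m J *m J) = - \tr (A *m J *m J).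
  by rewrite {1}hA mulNmx raddfN mxtrace_mulC mulmxA.
move=> /eqP; rewrite -subr_eq0 opprK -mulr2n mulrn_eq0 /= AJJ raddfN oppr_eq0.
by move/eqP.
Qed.

Lemma row_mulmx_eq0 (v : 'rV[R]_n) : (v *m J == 0) = (v == 0).
Proof.
apply/eqP/eqP => [vJ0 | ->]; last exact: mul0mx.
have -> : v = - (v *m J *m J) by rewrite -mulmxA sqrJ mulmxN mulmx1 opprK.
by rewrite vJ0 mul0mx oppr0.
Qed.

End AnticommutingMatrices.

Section Contraction.
Variables (R : numFieldType) (n : nat).
Implicit Types (M : 'I_n -> 'M[R]_n) (J : 'M[R]_n).

Definition contraction M : 'rV[R]_n := \row_b \sum_(a < n) M a a b.

Definition tensor_of M : 'I_n -> 'I_n -> 'I_n -> R := fun b c a => M a b c.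

(* tensor_of (twist J M) is (X, Y) |-> H(X, J Y) for H := tensor_of M. *)
Definition twist J M : 'I_n -> 'M[R]_n := fun a => \sum_(e < n) J e a *: M e.

Lemma contractionZ c M : contraction (fun a => c *: M a) = c *: contraction M.
Proof.
apply/rowP => b; rewrite !mxE mulr_sumr.
by apply: eq_bigr => a _; rewrite mxE.
Qed.

Lemma contraction_mulmxr M B :
  contraction (fun a => M a *m B) = contraction M *m B.
Proof.
apply/rowP => b; rewrite !mxE; under [RHS]eq_bigr do rewrite mxE big_distrl.
by rewrite exchange_big; apply: eq_bigr => a _; rewrite mxE.
Qed.

Lemma contraction_twist J M :
  contraction (twist J M) = contraction (fun e => J *m M e).
Proof.
apply/rowP => b; rewrite !mxE; under eq_bigr do rewrite summxE.
rewrite exchange_big; apply: eq_bigr => e _; rewrite mxE.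
by apply: eq_bigr => a _; rewrite mxE.
Qed.

Lemma anticomm_twist J M :
  (forall a, anticomm J (M a)) -> forall a, anticomm J (twist J M a).
Proof. by move=> hM a; apply: anticomm_sum => e; exact: anticommZ. Qed.

End Contraction.

Lemma trace_free_tensor (R : realType) (n : nat) (M : 'I_n -> 'M[R]_n) :
  (forall a, \tr (M a) = 0) ->
  trace_free (tensor_of M) <-> contraction M = 0.
Proof.
move=> trM; split=> [tfM | CM0 b].
  by apply/rowP => b; rewrite !mxE; case: (tfM b).
by split; [exact: trM | have /rowP/(_ b) := CM0; rewrite !mxE].
Qed.

Lemma scale_half_eq0 (R : numFieldType) (n : nat) (v : 'rV[R]_n) :
  (2^-1 *: v = 0) <-> (v = 0).
Proof.
split=> [/eqP | ->]; last exact: scaler0.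
by rewrite scaler_eq0 invr_eq0 pnatr_eq0 /= => /eqP.
Qed.

Section Connection.
Variables (R : realType) (n : nat) (J : 'I_n -> 'I_n -> 'rV[R]_n -> R)
  (Gam : 'I_n -> 'I_n -> 'I_n -> 'rV[R]_n -> R) (x : 'rV[R]_n).

Definition J_mx : 'M[R]_n := \matrix_(b, d) J b d x.
Definition dJ_mx a : 'M[R]_n := \matrix_(b, d) derive (J b d) x (@coord_dir R n a).
Definition Gam_mx a : 'M[R]_n := \matrix_(b, e) Gam b a e x.
Definition nablaJ_mx a : 'M[R]_n := \matrix_(b, d) nablaJ J Gam x a b d.
Definition G_mx a : 'M[R]_n := 2^-1 *: (nablaJ_mx a *m J_mx).

Lemma nablaJ_mxE a :
  nablaJ_mx a = dJ_mx a + Gam_mx a *m J_mx - J_mx *m Gam_mx a.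
Proof.
apply/matrixP => b d; rewrite !mxE; congr (_ + _ - _).
  by apply: eq_bigr => e _; rewrite !mxE.
by apply: eq_bigr => e _; rewrite !mxE mulrC.
Qed.

Lemma almost_complex_mx : almost_complex_at J x -> J_mx *m J_mx = - 1%:M.
Proof.
move=> acJ; apply/matrixP => b c; rewrite !mxE -acJ.
by apply: eq_bigr => d _; rewrite !mxE.
Qed.

(* Differentiating J^b_d J^d_c = -delta^b_c, constant near x, gives
   (d_v J) J + J (d_v J) = 0. *)
Lemma anticomm_dJ_mx (U : set 'rV[R]_n) a :
  open U -> U x ->
  (forall y, U y -> almost_complex_at J y) ->
  (forall y b d, U y -> differentiable (J b d) y) ->
  anticomm J_mx (dJ_mx a).
Proof.
move=> oU Ux acJ dJ; apply/matrixP => b c; rewrite mxE [RHS]mxE mxE.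
apply/eqP; rewrite -subr_eq0 opprK -big_split /=.
have derJ b' d : derivable (J b' d) x (@coord_dir R n a).
  exact/diff_derivable/dJ.
have JJ_cst : derive (\sum_(d < n) J b d * J d c) x (@coord_dir R n a) = 0.
  rewrite (@near_eq_derive R _ R^o _ (cst (- (b == c)%:R : R))) ?derive_cst //.
  apply: filterS (open_nbhs_nbhs (conj oU Ux)) => y Uy.
  by rewrite -(acJ y Uy b c) fct_sumE.
apply/eqP; rewrite -[RHS]JJ_cst derive_sum => [|d]; last exact: derivableM.
apply: eq_bigr => d _; rewrite deriveM // !mxE /GRing.scale /=.
by rewrite addrC (mulrC (J d c x)).
Qed.

Lemma anticomm_nablaJ_mx (U : set 'rV[R]_n) a :
  open U -> U x ->
  (forall y, U y -> almost_complex_at J y) ->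
  (forall y b d, U y -> differentiable (J b d) y) ->
  anticomm J_mx (nablaJ_mx a).
Proof.
move=> oU Ux acJ dJ; rewrite nablaJ_mxE -addrA.
apply: anticomm_add; first exact: anticomm_dJ_mx oU Ux acJ dJ.
exact/commutator_anticomm/almost_complex_mx/acJ.
Qed.

Lemma compatibleE : compatible J Gam x <-> contraction nablaJ_mx = 0.
Proof.
have CE b : contraction nablaJ_mx 0 b = \sum_(a < n) nablaJ J Gam x a a b.
  by rewrite mxE; apply: eq_bigr => a _; rewrite mxE.
split=> [compJ | /rowP CN0 b]; first by apply/rowP => b; rewrite CE compJ mxE.
by rewrite -CE CN0 mxE.
Qed.

Lemma GtensorE : Gtensor J Gam x = tensor_of G_mx.
Proof.
apply/funext => b; apply/funext => c; apply/funext => a; rewrite /tensor_of !mxE.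
by congr (_ * _); apply: eq_bigr => d _; rewrite !mxE.
Qed.

Lemma JGE : JG J Gam x = tensor_of (fun a => J_mx *m G_mx a).
Proof.
apply/funext => b; apply/funext => c; apply/funext => a; rewrite /JG GtensorE.
by rewrite /tensor_of /= mxE; apply: eq_bigr => e _; rewrite [J_mx _ _]mxE.
Qed.

Lemma G_XJYE : G_XJY J Gam x = tensor_of (twist J_mx G_mx).
Proof.
apply/funext => b; apply/funext => c; apply/funext => a; rewrite /G_XJY GtensorE.
rewrite /tensor_of /twist /= summxE; apply: eq_bigr => e _.
by rewrite [in RHS]mxE [J_mx _ _]mxE mulrC.
Qed.

Lemma G_JXJYE : G_JXJY J Gam x = tensor_of (twist J_mx (fun e => G_mx e *m J_mx)).
Proof.
apply/funext => b; apply/funext => c; apply/funext => a; rewrite /G_JXJY GtensorE.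
rewrite /tensor_of /twist /= summxE exchange_big; apply: eq_bigr => e _ /=.
rewrite [in RHS]mxE [J_mx _ _]mxE mxE mulr_sumr; apply: eq_bigr => d _.
by rewrite [J_mx _ _]mxE mulrC.
Qed.

Hypothesis sqrJ : J_mx *m J_mx = - 1%:M.
Hypothesis acN : forall a, anticomm J_mx (nablaJ_mx a).

Lemma anticomm_G a : anticomm J_mx (G_mx a).
Proof. exact/anticommZ/anticomm_mulmxr/acN. Qed.

Lemma J_mul_G a : J_mx *m G_mx a = 2^-1 *: nablaJ_mx a.
Proof. by rewrite /G_mx -scalemxAr mulmxA (mulmx_anticommK sqrJ (acN a)). Qed.

Lemma trace_free_tensor_compatible (M : 'I_n -> 'M[R]_n) :
  (forall a, anticomm J_mx (M a)) ->
  (contraction M = 2^-1 *: contraction nablaJ_mx \/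
   contraction M = 2^-1 *: (contraction nablaJ_mx *m J_mx)) ->
  trace_free (tensor_of M) <-> compatible J Gam x.
Proof.
move=> acM CM; rewrite compatibleE trace_free_tensor => [|a]; last first.
  exact: (mxtrace_anticomm sqrJ (acM a)).
case: CM => ->; rewrite scale_half_eq0 //.
by split=> [/eqP | ->]; [rewrite (row_mulmx_eq0 sqrJ) => /eqP | exact: mul0mx].
Qed.

Lemma contraction_J_mul_G :
  contraction (fun a => J_mx *m G_mx a) = 2^-1 *: contraction nablaJ_mx.
Proof.
by rewrite -contractionZ; congr contraction; apply/funext => a; exact: J_mul_G.
Qed.

Lemma trace_free_Gtensor : trace_free (Gtensor J Gam x) <-> compatible J Gam x.
Proof.
rewrite GtensorE; apply: trace_free_tensor_compatible; first exact: anticomm_G.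
by right; rewrite -contraction_mulmxr -contractionZ.
Qed.

Lemma trace_free_JG : trace_free (JG J Gam x) <-> compatible J Gam x.
Proof.
rewrite JGE; apply: trace_free_tensor_compatible => [a|].
  exact/anticomm_mulmxl/anticomm_G.
by left; rewrite contraction_J_mul_G.
Qed.

Lemma trace_free_G_XJY : trace_free (G_XJY J Gam x) <-> compatible J Gam x.
Proof.
rewrite G_XJYE; apply: trace_free_tensor_compatible.
  exact/anticomm_twist/anticomm_G.
by left; rewrite contraction_twist contraction_J_mul_G.
Qed.

Lemma trace_free_G_JXJY : trace_free (G_JXJY J Gam x) <-> compatible J Gam x.
Proof.
rewrite G_JXJYE; apply: trace_free_tensor_compatible.
  by apply: anticomm_twist => a; exact/anticomm_mulmxr/anticomm_G.
right; rewrite contraction_twist scalemxAl -contraction_J_mul_G.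
by rewrite -contraction_mulmxr; congr contraction; apply/funext => a; rewrite mulmxA.
Qed.

End Connection.

Theorem lemma2p9 (R : realType) (n : nat) (U : set 'rV[R]_n)
  (J : 'I_n -> 'I_n -> 'rV[R]_n -> R)
  (Gam : 'I_n -> 'I_n -> 'I_n -> 'rV[R]_n -> R) :
  open U ->
  (forall x, U x -> almost_complex_at J x) ->
  (forall x b d, U x -> differentiable (J b d) x) ->
  [<-> (forall x, U x -> compatible J Gam x);
       (forall x, U x -> trace_free (Gtensor J Gam x));
       (forall x, U x -> trace_free (JG J Gam x));
       (forall x, U x -> trace_free (G_XJY J Gam x));
       (forall x, U x -> trace_free (G_JXJY J Gam x))].
Proof.
move=> oU acJ dJ.
split; [|split; [|split; [|split]]] => h x Ux; move/(_ x Ux): h.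
all: have sqrJ := almost_complex_mx (acJ x Ux).
all: have acN a := anticomm_nablaJ_mx Gam a oU Ux acJ dJ.
all: by rewrite ?(trace_free_Gtensor sqrJ acN) ?(trace_free_JG sqrJ acN)
  ?(trace_free_G_XJY sqrJ acN) ?(trace_free_G_JXJY sqrJ acN).
Qed.
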